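(* Let $a<b$, $M$ an even positive integer, $h=(b-a)/M$, $\tau>0$, $0<\varepsilon\le1$, and let $V^0,A_1^0$ be real constants. For $l=-M/2,\dots,M/2-1$ let $\mu_l=2l\pi/(b-a)$. Consider the leap-frog finite difference (LFFD) scheme with constant potentials $V\equiv V^0$, $A_1\equiv A_1^0$ described in the context, and its von Neumann amplification factors: for each $l$, the complex numbers $\xi$ satisfying $$\det\Big[(\xi^2-1)I_2+2i\tau\xi\Big(\frac{\sigma_3}{\varepsilon}+V^0I_2-A_1^0\sigma_1+\frac{\sin(\mu_lh)}{\varepsilon h}\sigma_1\Big)\Big]=0.$$ If $$0<\tau\le\frac{\varepsilon h}{|V^0|\varepsilon h+\sqrt{h^2+(|A_1^0|\varepsilon h+1)^2}},$$ then every such amplification factor satisfies $|\xi|\le1$ for every $l=-M/2,\dots,M/2-1$, i.e. the LFFD scheme is linearly (von Neumann) stable.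
   Context: Pauli matrices: $\sigma_1=\begin{pmatrix}0&1\\1&0\end{pmatrix}$, $\sigma_3=\begin{pmatrix}1&0\\0&-1\end{pmatrix}$; $I_2$ the $2\times2$ identity. Grid: $x_j=a+jh$, $t_n=n\tau$, periodic convention $\varPhi^n_M=\varPhi^n_0$, $\varPhi^n_{-1}=\varPhi^n_{M-1}$, $\varPhi^n_{M+1}=\varPhi^n_1$; $\delta_t\varPhi^n_j=(\varPhi^{n+1}_j-\varPhi^{n-1}_j)/(2\tau)$, $\delta_x\varPhi^n_j=(\varPhi^n_{j+1}-\varPhi^n_{j-1})/(2h)$. The LFFD scheme with constant potentials is, for $n\ge1$, $j=0,\dots,M-1$, $$i\delta_t\varPhi^n_j=\frac1\varepsilon(-i\sigma_1\delta_x+\sigma_3)\varPhi^n_j+(V^0I_2-A_1^0\sigma_1)\varPhi^n_j.$$ The amplification factors arise by substituting $\varPhi^n_j=\sum_{l}\xi_l^n\widehat{\varPhi}_l e^{2ijl\pi/M}$ (with $\widehat{\varPhi}_l\in\mathbb{C}^2$) into the scheme. *)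

From HB Require Import structures.
From mathcomp Require Import all_boot all_order all_algebra.
From mathcomp Require Import all_classical all_reals all_analysis.
From mathcomp Require Import complex.
Set Implicit Arguments. Unset Strict Implicit. Unset Printing Implicit Defensive.
Import Order.TTheory GRing.Theory Num.Theory.
Local Open Scope ring_scope.
Local Open Scope complex_scope.

Definition sigma1 (R : rcfType) : 'M[R[i]]_2 :=
  \matrix_(j < 2, k < 2) (if j == k then 0 else 1).
Definition sigma3 (R : rcfType) : 'M[R[i]]_2 :=
  \matrix_(j < 2, k < 2) (if j == k then (if j == 0 then 1 else -1) else 0).

Definition LFFD_symbol (R : realType) (tau eps h V0 A10 mu : R) (xi : R[i]) : 'M[R[i]]_2 :=
  (xi ^+ 2 - 1)%:M
  + (2 * 'i * tau%:C * xi) *: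
      ((eps^-1)%:C *: sigma3 R + (V0%:C)%:M - A10%:C *: sigma1 R
       + ((sin (mu * h) / (eps * h))%:C) *: sigma1 R).

Definition amplification_factor (R : realType) (tau eps h V0 A10 mu : R) (xi : R[i]) : Prop :=
  \det (LFFD_symbol tau eps h V0 A10 mu xi) = 0.

From HB Require Import structures.
From mathcomp Require Import all_boot all_order all_algebra.
From mathcomp Require Import all_classical all_reals all_analysis.
From mathcomp Require Import complex.
From mathcomp Require Import ring lra.
Import Order.TTheory GRing.Theory Num.Theory.
Local Open Scope ring_scope.
Local Open Scope complex_scope.

(* The matrix σ3/ε + V0 I - A1 σ1 + (sin(μh)/(εh)) σ1 is Hermitian with
   eigenvalues V0 ± d, where d = LFFD_mode_radius, so the symbol determinant
   factors into the two scalar quadratics ξ² + 2iτ(V0 ± d)ξ - 1.  A root of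
   ξ² + 2icξ - 1 with real |c| <= 1 lies on the unit circle, and the step-size
   bound implies τ(|V0| + d) <= 1 uniformly in the mode μ; hence neither the
   parity of M nor the range of l matters. *)

Lemma det_mx2 (R : comPzRingType) (A : 'M[R]_2) :
  \det A = A 0 0 * A 1 1 - A 0 1 * A 1 0.
Proof.
rewrite (expand_det_row _ ord0) !big_ord_recl big_ord0 /cofactor.
rewrite !det_mx11 /= !mxE /= expr0 expr1 addr0 !mul1r mulN1r mulrN.
have -> : lift (lift ord0 ord0) (0 : 'I_1) = 0 :> 'I_2 by apply: val_inj.
by have -> : lift ord0 (0 : 'I_1) = 1 :> 'I_2 by apply: val_inj.
Qed.

Lemma unit_quadratic_root_norm {R : rcfType} {c : R} {z : R[i]} :
  `|c| <= 1 -> z ^+ 2 + 2 * 'i * c%:C * z - 1 = 0 -> `|z| = 1.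
Proof.
case: z => x y /ler_normlP[c_ge c_le] /eqP.
rewrite eq_complex /= => /andP[/eqP re_eq /eqP im_eq].
rewrite normc_def /=; congr (_%:C); rewrite -[RHS]sqrtr1; congr Num.sqrt.
have {re_eq} re_eq : x ^+ 2 - y ^+ 2 - 2 * c * y = 1.
  by apply: subr0_eq; rewrite -[RHS]re_eq; ring.
have /eqP : 2 * (x * (y + c)) = 0.
  by apply: subr0_eq; rewrite -[RHS]im_eq; ring.
rewrite mulf_eq0 pnatr_eq0 /= mulf_eq0 => /orP[/eqP x0 | /eqP yc0].
  (* x = 0 forces (y + c)² = c² - 1 <= 0, hence y = -c and c² = 1 *)
  subst x; have yc_sq : (y + c) ^+ 2 = 0.
    by apply/eqP; rewrite eq_le sqr_ge0 andbT; nra.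
  move/eqP: yc_sq; rewrite sqrf_eq0 addr_eq0 => /eqP y_eq; subst y; nra.
have -> : y = - c by apply: subr0_eq; rewrite opprK.
nra.
Qed.

Section LFFDSymbol.
Context {R : realType}.
Variables tau eps h V0 A10 mu : R.

Definition LFFD_mode_radius : R :=
  Num.sqrt (eps^-1 ^+ 2 + (sin (mu * h) / (eps * h) - A10) ^+ 2).

Local Notation d := LFFD_mode_radius.

Lemma det_LFFD_symbol (xi : R[i]) :
  \det (LFFD_symbol tau eps h V0 A10 mu xi) =
  (xi ^+ 2 + 2 * 'i * (tau * (V0 - d))%:C * xi - 1) *
  (xi ^+ 2 + 2 * 'i * (tau * (V0 + d))%:C * xi - 1).
Proof.
have d_sq : d%:C ^+ 2 = (eps^-1)%:C ^+ 2 + ((sin (mu * h) / (eps * h))%:C - A10%:C) ^+ 2.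
  by rewrite -rmorphB -!rmorphXn -rmorphD sqr_sqrtr // addr_ge0 ?sqr_ge0.
transitivity ((xi ^+ 2 - 1 + 2 * 'i * tau%:C * xi * V0%:C) ^+ 2
              - (2 * 'i * tau%:C * xi) ^+ 2 * d%:C ^+ 2).
  by rewrite d_sq det_mx2 /LFFD_symbol /sigma1 /sigma3 !mxE /=; ring.
by rewrite !rmorphM rmorphB rmorphD /=; ring.
Qed.

Lemma LFFD_mode_radius_le : 0 < eps -> 0 < h ->
  eps * h * d <= Num.sqrt (h ^+ 2 + (`|A10| * eps * h + 1) ^+ 2).
Proof.
move=> eps_gt0 h_gt0; have k_gt0 : 0 < eps * h by rewrite mulr_gt0.
have -> : eps * h * d = Num.sqrt (h ^+ 2 + (sin (mu * h) - A10 * (eps * h)) ^+ 2).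
  rewrite -{1}(gtr0_norm k_gt0) -sqrtr_sqr -sqrtrM ?sqr_ge0 //.
  by rewrite /LFFD_mode_radius; congr Num.sqrt; field; rewrite !gt_eqF.
rewrite ler_sqrt ?addr_ge0 ?sqr_ge0 // lerD2l -real_normK ?num_real //.
rewrite ler_sqr ?nnegrE ?addr_ge0 ?mulr_ge0 ?normr_ge0 ?(ltW eps_gt0) ?(ltW h_gt0) //.
apply: le_trans (ler_normB _ _) _; rewrite normrM (gtr0_norm k_gt0).
by have := sin_max (mu * h); lra.
Qed.

Lemma LFFD_cfl_mode_radius_le1 : 0 < tau -> 0 < eps -> 0 < h ->
  tau <= (eps * h) /
         (`|V0| * eps * h + Num.sqrt (h ^+ 2 + (`|A10| * eps * h + 1) ^+ 2)) ->
  tau * (`|V0| + d) <= 1.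
Proof.
move=> tau_gt0 eps_gt0 h_gt0; have k_gt0 : 0 < eps * h by rewrite mulr_gt0.
have rad_le := LFFD_mode_radius_le eps_gt0 h_gt0; set S := Num.sqrt _ in rad_le *.
have S_gt0 : 0 < S by rewrite sqrtr_gt0 ltr_pwDl ?sqr_ge0 ?exprn_gt0.
have den_gt0 : 0 < `|V0| * eps * h + S.
  by rewrite ltr_wpDl // -mulrA mulr_ge0 ?normr_ge0 ?(ltW k_gt0).
rewrite ler_pdivlMr // => cfl; rewrite -(ler_pM2r k_gt0) mul1r.
have := ler_wpM2l (ltW tau_gt0) rad_le; nra.
Qed.

End LFFDSymbol.

Theorem lemma4 (R : realType) (a b : R) (M : nat) (tau eps V0 A10 : R) :
  a < b -> (0 < M)%N -> ~~ odd M ->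
  let h := (b - a) / M%:R in
  0 < tau -> 0 < eps -> eps <= 1 ->
  tau <= (eps * h) /
         (`|V0| * eps * h + Num.sqrt (h ^+ 2 + (`|A10| * eps * h + 1) ^+ 2)) ->
  forall (l : int), - (M./2)%:Z <= l < (M./2)%:Z ->
  let mu := 2 * l%:~R * pi / (b - a) in
  forall xi : R[i], amplification_factor tau eps h V0 A10 mu xi ->
  `|xi| <= 1.
Proof.
move=> a_lt_b M_gt0 _ h tau_gt0 eps_gt0 _ cfl l _ mu xi.
have h_gt0 : 0 < h by rewrite divr_gt0 ?subr_gt0 ?ltr0n.
set d := LFFD_mode_radius eps h A10 mu.
have tau_d_le1 : tau * (`|V0| + d) <= 1 by apply: LFFD_cfl_mode_radius_le1.
have mode_le1 t : `|t| <= d -> `|tau * (V0 + t)| <= 1.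
  move=> t_le; apply: le_trans tau_d_le1.
  rewrite normrM (gtr0_norm tau_gt0) ler_wpM2l ?(ltW tau_gt0) //.
  by apply: le_trans (ler_normD _ _) _; rewrite lerD2l.
have d_ge0 : 0 <= d by apply: sqrtr_ge0.
rewrite /amplification_factor det_LFFD_symbol -/d => /eqP.
rewrite mulf_eq0 => /orP[] /eqP /(unit_quadratic_root_norm (mode_le1 _ _)) -> //.
  by rewrite normrN ger0_norm.
by rewrite ger0_norm.
Qed.
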